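(* Let $G$ be a finite group and $H$ a subgroup such that $\mathcal{O}_G(H)$ is Boolean with coatoms $M_1,\ldots,M_\ell$. If $\mathcal{O}_G(H)$ is group-complemented, then $\hat\varphi(H,G)=\prod_{i=1}^{\ell}(|G:M_i|-1)$.
   Context: $\mathcal{O}_G(H)=\{K\mid H\le K\le G\}$; Boolean means isomorphic to the lattice of subsets of a finite set; coatoms are the maximal elements of $\mathcal{O}_G(H)\setminus\{G\}$. For $K\in\mathcal{O}_G(H)$, $K^{\complement}$ is its lattice complement ($K\cap K^{\complement}=H$, $\langle K,K^{\complement}\rangle=G$); $\mathcal{O}_G(H)$ is group-complemented if $KK^{\complement}=K^{\complement}K$ for all $K\in\mathcal{O}_G(H)$. The dual Euler totient is $\hat\varphi(H,G)=\sum_{K\in\mathcal{O}_G(H)}\mu(H,K)|G:K|$ with $\mu$ the Möbius function of $\mathcal{O}_G(H)$. *)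

From mathcomp Require Import all_boot all_algebra all_fingroup.
Set Implicit Arguments. Unset Strict Implicit. Unset Printing Implicit Defensive.
Import GRing.Theory.
Local Open Scope group_scope.

Section Overgroups.
Variable gT : finGroupType.
Implicit Types H G K L M : {group gT}.

Definition in_interval H G K : bool := (H \subset K) && (K \subset G).

(* The fuel argument n is
   always large enough (#|Z| strictly decreases). *)
Fixpoint mobius_rec H (n : nat) K : int :=
  match n with
  | 0 => 0%R
  | n'.+1 =>
      if K == H then 1%R
      else if H \subset K then
        (- \sum_(Z : {group gT} | (H \subset Z) && (Z \proper K)) mobius_rec H n' Z)%R
      else 0%R
  end.

Definition mobius H K : int := mobius_rec H #|K|.+1 K.

Definition dual_totient H G : int :=
  (\sum_(K : {group gT} | in_interval H G K) mobius H K * (#|G : K|)%:Z)%R.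

Definition interval_boolean H G : Prop :=
  exists (n : nat) (f : {group gT} -> {set 'I_n}),
    [/\ {in in_interval H G &, injective f},
        (forall S : {set 'I_n}, exists2 K, in_interval H G K & f K = S)
      & {in in_interval H G &, forall K L, (K \subset L) = (f K \subset f L)}].

Definition coatom H G M : bool :=
  [&& in_interval H G M, M != G &
      [forall K : {group gT}, (in_interval H G K && (M \subset K) && (K != G)) ==> (K == M)]].

Definition lat_complement H G K Kc : bool :=
  [&& in_interval H G Kc, K :&: Kc == H & K <*> Kc == G].

Definition group_complemented H G : Prop :=
  forall K Kc : {group gT}, in_interval H G K -> lat_complement H G K Kc ->
    (K * Kc)%g = (Kc * K)%g.

End Overgroups.

(* Write K_S for the element of O_G(H) corresponding to S, a subset of
   {0, ..., n-1}.  The Moebius function of a Boolean lattice is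
   mu(H, K_S) = (-1)^|S|.  Group-complementation gives K_S K_{~S} = G, and
   the modular law then yields K_S K_T = K_{S u T} for disjoint S and T, so
   indices over H multiply: |G : K_S| = |K_{~S} : H| = prod_{i not in S} a_i
   with a_i = |K_{i} : H| = |G : M_i|, where M_i = K_{~{i}} are the coatoms.
   Hence the dual totient is sum_S (-1)^|S| prod_{i not in S} a_i, which is
   the expansion of prod_i (a_i - 1). *)

From mathcomp Require Import all_boot all_algebra all_fingroup.
Set Implicit Arguments. Unset Strict Implicit. Unset Printing Implicit Defensive.
Import GRing.Theory.
Local Open Scope group_scope.

Lemma prodrD_set (R : comNzRingType) (I : finType) (a b : I -> R) :
  (\prod_i (a i + b i) =
     \sum_(S : {set I}) (\prod_(i in S) a i * \prod_(i in ~: S) b i))%R.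
Proof.
rewrite bigA_distr; apply: eq_bigr => S _.
rewrite (bigID (mem S)) /=; congr (_ * _)%R.
  by apply: eq_bigr => i ->.
by apply: eq_big => [i|i /negbTE ->]; rewrite ?inE.
Qed.

Lemma sum_sign_subset_eq0 (R : comNzRingType) (I : finType) (T : {set I}) :
  T != set0 -> (\sum_(S : {set I} | S \subset T) (-1) ^+ #|S| = 0 :> R)%R.
Proof.
case/set0Pn => j Tj.
have := prodrD_set (fun i => if i \in T then -1 else 0)%R (fun=> 1 : R)%R.
rewrite (bigD1 j) //= Tj addNr mul0r => /esym E.
rewrite -[RHS]E big_mkcond; apply: eq_bigr => S _; rewrite big1_eq mulr1.
have [ST | /subsetPn[k Sk Tk]] := boolP (S \subset T).
  by rewrite -prodr_const; apply: eq_bigr => i Si; rewrite (subsetP ST).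
by rewrite (bigD1 k) //= (negbTE Tk) mul0r.
Qed.

Lemma sum_sign_proper (R : comNzRingType) (I : finType) (S : {set I}) :
  S != set0 -> (\sum_(T : {set I} | T \proper S) (-1) ^+ #|T| = - (-1) ^+ #|S| :> R)%R.
Proof.
move/(@sum_sign_subset_eq0 R); rewrite (bigD1 S) //= addrC => /eqP.
by rewrite addr_eq0 => /eqP <-; apply: eq_bigl => T; rewrite properEneq andbC.
Qed.

Lemma cardsC_eq1_maximal (I : finType) (S : {set I}) :
  (#|~: S| == 1%N) =
    (S != setT) && [forall T : {set I}, (S \subset T) && (T != setT) ==> (T == S)].
Proof.
apply/cards1P/andP => [[i CSi] | [nTS /forallP maxS]].
  have -> : S = [set~ i] by rewrite -[S]setCK CSi.
  split; first by apply/eqP => /setP/(_ i); rewrite !inE eqxx.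
  apply/forallP => T; apply/implyP => /andP[sST nTT].
  rewrite eq_sym eqEsubset sST /= subsetC sub1set; apply/setCP => Ti.
  case/eqP: nTT; apply/eqP; rewrite -subTset; apply/subsetP => j _.
  by have [-> // | ji] := eqVneq j i; apply: (subsetP sST); rewrite !inE ji.
have [i CSi] : exists i, i \in ~: S.
  by apply/set0Pn; apply: contraNneq nTS => CS0; rewrite -[S]setCK CS0 setC0.
have nTi : [set~ i] != setT by apply/eqP => /setP/(_ i); rewrite !inE eqxx.
have := maxS [set~ i]; rewrite subsetC sub1set CSi nTi => /eqP Si.
by exists i; rewrite -Si setCK.
Qed.

Lemma big_set1_disjoint (R : Type) (idx : R) (op : Monoid.com_law idx)
    (I : finType) (phi : {set I} -> R) :
    phi set0 = idx ->
    (forall S T : {set I}, [disjoint S & T] -> phi (S :|: T) = op (phi S) (phi T)) ->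
  forall S, phi S = \big[op/idx]_(i in S) phi [set i].
Proof.
move=> phi0 phiU S; elim: {S}_.+1 {-2}S (ltnSn #|S|) => // m IHm S leSm.
have [-> | [i Si]] := set_0Vmem S; first by rewrite big_set0.
rewrite (big_setD1 i Si) -IHm; last by rewrite (cardsD1 i) Si in leSm.
by rewrite -phiU ?setD1K // disjoints1 !inE eqxx.
Qed.

Lemma indexMgI (gT : finGroupType) (K L M : {group gT}) :
  K * L = M -> #|M : K :&: L| = (#|K : K :&: L| * #|L : K :&: L|)%N.
Proof.
move=> defM; have sKLM : K :&: L \subset M.
  by rewrite -defM (subset_trans (subsetIl K L)) ?mulG_subl.
apply/eqP; rewrite -(eqn_pmul2r (cardG_gt0 (K :&: L))) -mulnA.
rewrite [(#|M : _| * _)%N]mulnC [(#|L : _| * _)%N]mulnC !Lagrange ?subsetIr //.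
by rewrite indexgI LagrangeMr defM.
Qed.

Section BooleanInterval.

Variables (gT : finGroupType) (H G : {group gT}) (n : nat).
Variable f : {group gT} -> {set 'I_n}.
Hypothesis sHG : H \subset G.
Hypothesis f_surj : forall S : {set 'I_n}, exists2 K, in_interval H G K & f K = S.
Hypothesis f_mono :
  {in in_interval H G &, forall K L : {group gT}, (K \subset L) = (f K \subset f L)}.

Definition grp_of (S : {set 'I_n}) : {group gT} :=
  odflt H [pick K | in_interval H G K && (f K == S)].

Lemma grp_ofP S : in_interval H G (grp_of S) /\ f (grp_of S) = S.
Proof.
rewrite /grp_of; case: pickP => [K /andP[iK /eqP]|] //=.
by case: (f_surj S) => K iK fK /(_ K); rewrite iK fK eqxx.
Qed.

Lemma grp_of_interval S : grp_of S \in in_interval H G.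
Proof. by case: (grp_ofP S). Qed.

Lemma grp_ofK : cancel grp_of f.
Proof. by move=> S; case: (grp_ofP S). Qed.

Lemma grp_of_inj : injective grp_of.
Proof. exact: can_inj grp_ofK. Qed.

Lemma grp_of_sub S T : (grp_of S \subset grp_of T) = (S \subset T).
Proof. by rewrite f_mono ?grp_of_interval // !grp_ofK. Qed.

Lemma f_grp_ofK : {in in_interval H G, cancel f grp_of}.
Proof.
move=> K iK; apply/val_inj/eqP.
by rewrite eqEsubset !f_mono ?grp_of_interval // grp_ofK subxx.
Qed.

Lemma interval_H : H \in in_interval H G.
Proof. by rewrite unfold_in /in_interval subxx sHG. Qed.

Lemma interval_G : G \in in_interval H G.
Proof. by rewrite unfold_in /in_interval subxx sHG. Qed.

Lemma sub_grp_of S : H \subset grp_of S.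
Proof. by case/andP: (grp_of_interval S). Qed.

Lemma grp_of_subG S : grp_of S \subset G.
Proof. by case/andP: (grp_of_interval S). Qed.

Lemma sub_grp_ofE K S : K \in in_interval H G -> (K \subset grp_of S) = (f K \subset S).
Proof. by move=> iK; rewrite f_mono ?grp_of_interval // grp_ofK. Qed.

Lemma grp_of_subE S K : K \in in_interval H G -> (grp_of S \subset K) = (S \subset f K).
Proof. by move=> iK; rewrite f_mono ?grp_of_interval // grp_ofK. Qed.

Lemma grp_of0 : grp_of set0 = H.
Proof.
apply/val_inj/eqP; rewrite eqEsubset sub_grp_of andbT.
by rewrite grp_of_subE ?interval_H ?sub0set.
Qed.

Lemma grp_ofT : grp_of setT = G.
Proof.
apply/val_inj/eqP; rewrite eqEsubset grp_of_subG.
by rewrite sub_grp_ofE ?interval_G ?subsetT.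
Qed.

Lemma grp_ofI S T : grp_of S :&: grp_of T = grp_of (S :&: T).
Proof.
have iST : (grp_of S :&: grp_of T)%G \in in_interval H G.
  by rewrite unfold_in /in_interval subsetI !sub_grp_of subIset ?grp_of_subG.
apply/eqP; rewrite eqEsubset subsetI !grp_of_sub subsetIl subsetIr andbT.
by rewrite (sub_grp_ofE _ iST) subsetI -!sub_grp_ofE ?subsetIl ?subsetIr.
Qed.

Lemma grp_ofU S T : grp_of S <*> grp_of T = grp_of (S :|: T).
Proof.
have iST : (grp_of S <*> grp_of T)%G \in in_interval H G.
  rewrite unfold_in /in_interval join_subG !grp_of_subG.
  by rewrite (subset_trans (sub_grp_of S)) ?joing_subl.
apply/eqP; rewrite eqEsubset join_subG !grp_of_sub subsetUl subsetUr /=.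
by rewrite (grp_of_subE _ iST) subUset -!grp_of_subE ?joing_subl ?joing_subr.
Qed.

Lemma mobius_rec_grp_of m S :
  #|grp_of S| < m -> mobius_rec H m (grp_of S) = ((-1) ^+ #|S|)%R.
Proof.
elim: m S => // m IHm S ltSm /=.
case: eqP => [|/eqP nHS]; first by rewrite -grp_of0 => /grp_of_inj ->; rewrite cards0.
have nS0 : S != set0 by apply: contraNneq nHS => ->; rewrite grp_of0.
rewrite sub_grp_of -[RHS]opprK -(sum_sign_proper _ nS0); congr (- _)%R.
rewrite (reindex_onto grp_of f) /= => [|K /andP[sHK ltKS]]; last first.
  rewrite f_grp_ofK // unfold_in /in_interval sHK.
  by rewrite (subset_trans (proper_sub ltKS)) ?grp_of_subG.
apply: eq_big => [T | T /andP[/andP[_ ltTS] _]].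
  by rewrite sub_grp_of grp_ofK eqxx andbT properE !grp_of_sub -properE.
by rewrite IHm // (leq_trans (proper_card ltTS)).
Qed.

Lemma mobius_grp_of S : mobius H (grp_of S) = ((-1) ^+ #|S|)%R.
Proof. exact: mobius_rec_grp_of. Qed.

Lemma grp_of_eqG S : (grp_of S == G) = (S == setT).
Proof. by rewrite -grp_ofT (inj_eq grp_of_inj). Qed.

Lemma coatom_grp_of S : coatom H G (grp_of S) = (#|~: S| == 1%N).
Proof.
rewrite cardsC_eq1_maximal /coatom {1}/in_interval sub_grp_of grp_of_subG grp_of_eqG /=.
congr (_ && _); apply/forallP/forallP => maxS T.
  have := maxS (grp_of T).
  by rewrite /in_interval sub_grp_of grp_of_subG grp_of_sub grp_of_eqG (inj_eq grp_of_inj).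
apply/implyP => /andP[/andP[iT]].
rewrite -(f_grp_ofK iT) grp_of_sub grp_of_eqG (inj_eq grp_of_inj) => sST nTT.
by have := maxS (f T); rewrite sST nTT.
Qed.

Lemma dual_totient_grp_of :
  dual_totient H G = (\sum_(S : {set 'I_n}) (-1) ^+ #|S| * (#|G : grp_of S|)%:Z)%R.
Proof.
rewrite /dual_totient (reindex_onto grp_of f) /= => [|K iK]; last exact: f_grp_ofK.
apply: eq_big => [S | S _]; last by rewrite mobius_grp_of.
by rewrite /in_interval sub_grp_of grp_of_subG grp_ofK eqxx.
Qed.

Lemma big_coatom (R : Type) (idx : R) (op : Monoid.com_law idx) (F : {group gT} -> R) :
  \big[op/idx]_(M | coatom H G M) F M = \big[op/idx]_(i : 'I_n) F (grp_of [set~ i]).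
Proof.
rewrite (reindex_onto grp_of f) /= => [|M /and3P[iM _ _]]; last exact: f_grp_ofK.
rewrite (reindex_inj (@setC_inj _)) -(big_cards1 _ (fun A => F (grp_of (~: A)))) /=.
by apply: eq_bigl => S; rewrite coatom_grp_of setCK grp_ofK eqxx andbT.
Qed.

Section Complemented.

Hypothesis grp_compl : group_complemented H G.

Lemma mul_grp_ofC S : grp_of S * grp_of (~: S) = G.
Proof.
have lcS : lat_complement H G (grp_of S) (grp_of (~: S)).
  rewrite /lat_complement {1}/in_interval sub_grp_of grp_of_subG.
  by rewrite grp_ofI setICr grp_of0 eqxx grp_ofU setUCr grp_ofT eqxx.
rewrite -comm_joingE; first by rewrite grp_ofU setUCr grp_ofT.
exact: grp_compl (grp_of_interval S) lcS.
Qed.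

Lemma mul_grp_of_disjoint (S T : {set 'I_n}) :
  [disjoint S & T] -> grp_of S * grp_of T = grp_of (S :|: T).
Proof.
move=> dST.
have -> : grp_of T :=: grp_of (~: S) :&: grp_of (S :|: T).
  rewrite grp_ofI setIUr [~: S :&: S]setIC setICr set0U (setIidPr _) //.
  by rewrite disjoint_sym disjoints_subset in dST.
rewrite group_modl ?grp_of_sub ?subsetUl // mul_grp_ofC.
exact/setIidPr/grp_of_subG.
Qed.

Lemma index_grp_ofU (S T : {set 'I_n}) : [disjoint S & T] ->
  #|grp_of (S :|: T) : H| = (#|grp_of S : H| * #|grp_of T : H|)%N.
Proof.
move=> dST; have := indexMgI (mul_grp_of_disjoint dST).
by rewrite grp_ofI (disjoint_setI0 dST) grp_of0.
Qed.

Lemma index_grp_of S : #|grp_of S : H| = (\prod_(i in S) #|grp_of [set i] : H|)%N.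
Proof.
apply: (big_set1_disjoint (phi := fun S => #|grp_of S : H|)) => [|T U].
  by rewrite grp_of0 indexgg.
exact: index_grp_ofU.
Qed.

Lemma indexg_grp_of S : #|G : grp_of S| = #|grp_of (~: S) : H|.
Proof.
have := Lagrange_index (grp_of_subG S) (sub_grp_of S).
rewrite -{2}grp_ofT -(setUCr S) index_grp_ofU; last by rewrite disjoints_subset setCK.
by rewrite mulnC => /eqP; rewrite eqn_pmul2l ?indexg_gt0 // => /eqP.
Qed.

End Complemented.

End BooleanInterval.

Theorem lemma10p13 (gT : finGroupType) (G H : {group gT}) :
  H \subset G ->
  interval_boolean H G ->
  group_complemented H G ->
  dual_totient H G =
    (\prod_(M : {group gT} | coatom H G M) ((#|G : M|%g)%:Z - 1))%R.
Proof.
move=> sHG [n [f [_ f_surj f_mono]]] grp_compl.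
have indexgE := indexg_grp_of sHG f_surj f_mono grp_compl.
have indexE := index_grp_of sHG f_surj f_mono grp_compl.
rewrite (dual_totient_grp_of sHG f_surj f_mono) (big_coatom sHG f_surj f_mono).
under [RHS]eq_bigr do rewrite indexgE setCK addrC.
rewrite prodrD_set; apply: eq_bigr => S _.
rewrite prodr_const indexgE indexE -natz natr_prod; congr (_ * _)%R.
by apply: eq_bigr => i _; rewrite natz.
Qed.
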